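(* Let $k\ge 0$ and let $\mathcal{M}$ be a uniform oriented matroid of rank $r\ge 2$ on $n=r+k$ elements (i.e. of corank $k$). Then $$\operatorname{diam}(G^*(\mathcal{M}))\le \max\{\operatorname{diam}(G^*(\mathcal{M}')) : \mathcal{M}' \text{ a uniform oriented matroid of rank } r' \text{ on } r'+k \text{ elements},\ 2\le r'\le k+2\}.$$
   Context: Sign vectors: for a finite set $E$ and $X\in\{+,-,0\}^E$, write $X^+=\{e:X_e=+\}$, $X^-=\{e:X_e=-\}$, $X^0=\{e:X_e=0\}$, $\operatorname{supp}(X)=X^+\cup X^-$, and $-X$ for the componentwise negation. For sign vectors $X,Y$, the separating set is $S(X,Y)=(X^+\cap Y^-)\cup(X^-\cap Y^+)$, and the composition $X\circ Y$ is given by $(X\circ Y)_e=X_e$ if $X_e\neq 0$ and $(X\circ Y)_e=Y_e$ otherwise. An oriented matroid $\mathcal{M}=(E,\mathcal{C}^* )$ is a finite set $E$ together with a set $\mathcal{C}^*\subseteq\{+,-,0\}^E$ of (signed) cocircuits satisfying: (CC0) $\mathbf{0}\notin\mathcal{C}^*$; (CC1) $X\in\mathcal{C}^*\Rightarrow -X\in\mathcal{C}^*$; (CC2) if $X,Y\in\mathcal{C}^*$ and $\operatorname{supp}(X)\subseteq\operatorname{supp}(Y)$ then $X=\pm Y$; (CC3) if $X,Y\in\mathcal{C}^*$, $X\neq -Y$ and $e\in S(X,Y)$, then there is $Z\in\mathcal{C}^*$ with $Z^+\subseteq (X^+\cup Y^+)\setminus\{e\}$ and $Z^-\subseteq (X^-\cup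 Y^-)\setminus\{e\}$. The covectors of $\mathcal{M}$ are $\mathbf{0}$ together with all compositions $X^1\circ\cdots\circ X^k$ ($k\ge 1$) of cocircuits, partially ordered componentwise by $0<+$ and $0<-$ ($+,-$ incomparable). The rank $r$ of $\mathcal{M}$ is the largest $k$ such that there is a chain $\mathbf{0}=V_0<V_1<\cdots<V_k$ of covectors; the corank is $|E|-r$. $\mathcal{M}$ is uniform if $|X^0|=r-1$ for every cocircuit $X$. The cocircuit graph $G^*(\mathcal{M})$ has the cocircuits as vertices, with distinct cocircuits $X,Y$ adjacent iff $|X^0\cap Y^0|\ge r-2$ and $S(X,Y)=\emptyset$. $\operatorname{diam}(G^*(\mathcal{M}))$ is the maximum graph distance between two cocircuits. *)

From mathcomp Require Import all_boot.
Set Implicit Arguments. Unset Strict Implicit. Unset Printing Implicit Defensive.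

(* Signs: None = 0, Some true = +, Some false = -. Ground set E = 'I_n. *)
Definition sv (n : nat) := {ffun 'I_n -> option bool}.

Section SignVectors.
Variable n : nat.
Implicit Types X Y : sv n.

Definition sv0 : sv n := [ffun _ => None].
Definition svpos X : {set 'I_n} := [set e | X e == Some true].
Definition svneg X : {set 'I_n} := [set e | X e == Some false].
Definition svzero X : {set 'I_n} := [set e | X e == None].
Definition svsupp X : {set 'I_n} := svpos X :|: svneg X.
Definition svopp X : sv n := [ffun e => omap negb (X e)].
Definition svsep X Y : {set 'I_n} :=
  (svpos X :&: svneg Y) :|: (svneg X :&: svpos Y).
Definition svcomp X Y : sv n :=
  [ffun e => if X e is Some b then Some b else Y e].

Definition svle X Y : bool := [forall e, (X e == None) || (X e == Y e)].
Definition svlt X Y : bool := (X != Y) && svle X Y.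

Definition is_oriented_matroid (C : {set sv n}) : Prop :=
  [/\ sv0 \notin C,
      (forall X, X \in C -> svopp X \in C),
      (forall X Y, X \in C -> Y \in C -> svsupp X \subset svsupp Y ->
          X = Y \/ X = svopp Y) &
      (forall X Y e, X \in C -> Y \in C -> X <> svopp Y -> e \in svsep X Y ->
          exists2 Z, Z \in C &
            svpos Z \subset (svpos X :|: svpos Y) :\ e /\
            svneg Z \subset (svneg X :|: svneg Y) :\ e)].

Definition covector (C : {set sv n}) (V : sv n) : Prop :=
  exists s : seq (sv n), all (mem C) s /\ V = foldr svcomp sv0 s.

(* a chain 0 = V0 < V1 < ... < Vk of covectors, represented by [V1;...;Vk] *)
Definition covector_chain (C : {set sv n}) (s : seq (sv n)) : Prop :=
  path svlt sv0 s /\ (forall V, V \in s -> covector C V).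

Definition has_rank (C : {set sv n}) (r : nat) : Prop :=
  (exists s, covector_chain C s /\ size s = r) /\
  (forall s, covector_chain C s -> size s <= r).

Definition uniform (C : {set sv n}) (r : nat) : Prop :=
  forall X, X \in C -> #|svzero X| = r - 1.

Definition cocircuit_adj (C : {set sv n}) (r : nat) : rel (sv n) :=
  fun X Y => [&& X \in C, Y \in C, X != Y,
                r - 2 <= #|svzero X :&: svzero Y| & svsep X Y == set0].

Definition dist_le (C : {set sv n}) (r : nat) X Y (d : nat) : Prop :=
  exists s : seq (sv n),
    [/\ size s <= d, path (cocircuit_adj C r) X s & last X s = Y].

Definition is_cocircuit_diam (C : {set sv n}) (r : nat) (D : nat) : Prop :=
  (forall X Y, X \in C -> Y \in C -> dist_le C r X Y D) /\
  (forall D', (forall X Y, X \in C -> Y \in C -> dist_le C r X Y D') -> D <= D').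

End SignVectors.

From mathcomp Require Import all_boot zify.
From Stdlib Require Import Classical_Prop Wf_nat.
Set Implicit Arguments. Unset Strict Implicit. Unset Printing Implicit Defensive.

(* The key operation is the contraction M/e at an element e: its cocircuits
   are the cocircuits of M vanishing at e, with the coordinate e deleted.
   Contracting a uniform oriented matroid of rank r+1 on n+1 elements gives a
   uniform oriented matroid of rank r on n elements, of the same corank, and
   paths of the cocircuit graph G*(M/e) lift to paths of G*(M).

   If r > k+2 and n = r+k, the zero sets of two cocircuits X, Y (each of size
   r-1) meet in some e, so X and Y come from cocircuits of M/e and their
   distance in G*(M) is at most the diameter of G*(M/e).  Taking e with the
   largest contracted diameter, induction on r bounds diam G*(M) by the
   diameter of a uniform oriented matroid of corank k and rank <= k+2.

   To run the induction, two properties must survive contraction: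
   - every (r-1)-subset of E is the zero set of a cocircuit; this is
     equivalent to having rank r (proved in both directions, the hard one by
     contracting the top of a maximal chain of covectors and exchanging zero
     sets by circuit elimination);
   - the cocircuit graph is connected, so that the diameter exists (by
     elimination in rank 2, and through contractions in higher rank). *)

Section SignVectorFacts.
Variable n : nat.
Implicit Types X Y Z V W : sv n.

Lemma svzero_opp X : svzero (svopp X) = svzero X.
Proof. by apply/setP => j; rewrite !inE ffunE; case: (X j). Qed.

Lemma svsepE X Y : svsep X Y =
  [set j | ((X j == Some true) && (Y j == Some false)) ||
           ((X j == Some false) && (Y j == Some true))].
Proof. by apply/setP => j; rewrite !inE. Qed.

Lemma svsep_suppl X Y : svsep X Y \subset ~: svzero X.
Proof. by apply/subsetP => j; rewrite svsepE !inE => /orP [] /andP [/eqP -> _]. Qed.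

Lemma svsep_suppr X Y : svsep X Y \subset ~: svzero Y.
Proof. by apply/subsetP => j; rewrite svsepE !inE => /orP [] /andP [_ /eqP ->]. Qed.

Lemma svsep_opp X : svsep (svopp X) X = ~: svzero X.
Proof. by apply/setP => j; rewrite svsepE !inE ffunE; case: (X j) => // -[]. Qed.

Lemma svcomp0l X : svcomp (sv0 n) X = X.
Proof. by apply/ffunP => j; rewrite !ffunE. Qed.

Lemma svcomp0r X : svcomp X (sv0 n) = X.
Proof. by apply/ffunP => j; rewrite !ffunE; case: (X j). Qed.

Lemma svcompA X Y Z : svcomp X (svcomp Y Z) = svcomp (svcomp X Y) Z.
Proof. by apply/ffunP => j; rewrite !ffunE; case: (X j). Qed.

Lemma foldr_svcomp_rcons (u : seq (sv n)) X :
  foldr (@svcomp n) (sv0 n) (rcons u X) = svcomp (foldr (@svcomp n) (sv0 n) u) X.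
Proof. by elim: u => [|Y u IH] /=; rewrite ?svcomp0l ?svcomp0r // IH svcompA. Qed.

Lemma svzero_comp X Y : svzero (svcomp X Y) = svzero X :&: svzero Y.
Proof. by apply/setP => j; rewrite !inE ffunE; case: (X j). Qed.

Lemma foldr_svcomp_zero (u : seq (sv n)) j :
  (foldr (@svcomp n) (sv0 n) u j == None) = all (fun X : sv n => X j == None) u.
Proof. by elim: u => [|X u IH] /=; rewrite ffunE //; case: (X j). Qed.

Lemma svle_zero V W : svle V W -> svzero W \subset svzero V.
Proof.
move/forallP => h; apply/subsetP => j; rewrite !inE => /eqP hW.
by case/orP: (h j) => [//|/eqP ->]; rewrite hW.
Qed.

Lemma svlt_zero V W : svlt V W -> svzero W \proper svzero V.
Proof.
case/andP => hne hle; apply/properP; split; first exact: svle_zero.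
have /subsetPn [j hVj hWj] : ~~ (svzero V \subset svzero W).
  apply: contra hne => hsub; apply/eqP/ffunP => j.
  move/forallP: hle => /(_ j); case/orP => [/eqP hV|/eqP //].
  by have := subsetP hsub j; rewrite !inE hV => /(_ isT) /eqP.
by exists j.
Qed.

Lemma svlt_path_size V s : path (@svlt n) V s -> size s <= #|svzero V|.
Proof.
elim: s V => //= W s IH V /andP [hVW hp].
exact: leq_ltn_trans (IH _ hp) (proper_card (svlt_zero hVW)).
Qed.

Lemma svlt_path_last V s W : path (@svlt n) V s -> W \in V :: s ->
  svzero (last V s) \subset svzero W.
Proof.
elim: s V W => [|U s IH] V W /=; first by rewrite inE => _ /eqP ->.
case/andP => /andP [_ hle] hp; rewrite inE => /orP [/eqP ->|hW]; last exact: IH.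
exact: subset_trans (IH _ _ hp (mem_head _ _)) (svle_zero hle).
Qed.

End SignVectorFacts.

Section Elimination.
Variable n : nat.
Implicit Types X Y Z : sv n.

Definition eliminant X Y e Z : Prop :=
  svpos Z \subset (svpos X :|: svpos Y) :\ e /\
  svneg Z \subset (svneg X :|: svneg Y) :\ e.

Lemma eliminant_pos X Y e Z j : eliminant X Y e Z -> Z j = Some true ->
  j != e /\ (X j = Some true \/ Y j = Some true).
Proof.
case=> hp _ hj; have := subsetP hp j; rewrite !inE hj eqxx => /(_ isT) /andP [hje hXY].
by split => //; case/orP: hXY => /eqP; [left|right].
Qed.

Lemma eliminant_neg X Y e Z j : eliminant X Y e Z -> Z j = Some false ->
  j != e /\ (X j = Some false \/ Y j = Some false).
Proof.
case=> _ hn hj; have := subsetP hn j; rewrite !inE hj eqxx => /(_ isT) /andP [hje hXY].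
by split => //; case/orP: hXY => /eqP; [left|right].
Qed.

Lemma eliminant_zero X Y e Z : eliminant X Y e Z ->
  e |: (svzero X :&: svzero Y) \subset svzero Z.
Proof.
move=> hZ; apply/subsetP => j hj; rewrite inE.
have hj' : (j == e) || ((X j == None) && (Y j == None)) by move: hj; rewrite !inE.
case E: (Z j) => [[]|] //.
- by have [hje [hXY|hXY]] := eliminant_pos hZ E; move: hj'; rewrite (negbTE hje) hXY ?andbF.
- by have [hje [hXY|hXY]] := eliminant_neg hZ E; move: hj'; rewrite (negbTE hje) hXY ?andbF.
Qed.

Lemma eliminant_sep_proper X Y e Z : eliminant X Y e Z -> e \in svsep X Y ->
  svsep X Z \proper svsep X Y /\ svsep Z Y \proper svsep X Y.
Proof.
move=> hZ he.
have hZe : Z e = None.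
  by apply/eqP; have := subsetP (eliminant_zero hZ) e; rewrite !inE eqxx => /(_ isT).
split; apply/properP; (split; last by exists e => //; rewrite !svsepE !inE hZe /= ?andbF);
  apply/subsetP => j; rewrite !svsepE !inE.
- case/orP => /andP [/eqP h1 /eqP h2].
    by have [_ [h3|h3]] := eliminant_neg hZ h2; [congruence | rewrite h1 h3 !eqxx].
  by have [_ [h3|h3]] := eliminant_pos hZ h2; [congruence | rewrite h1 h3 !eqxx orbT].
- case/orP => /andP [/eqP h1 /eqP h2].
    by have [_ [h3|h3]] := eliminant_pos hZ h1; [rewrite h2 h3 !eqxx | congruence].
  by have [_ [h3|h3]] := eliminant_neg hZ h1; [rewrite h2 h3 !eqxx orbT | congruence].
Qed.

Lemma elim_zero_at (C : {set sv n}) X Y b : is_oriented_matroid C ->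
  X \in C -> Y \in C -> svzero X != svzero Y ->
  b \notin svzero X -> b \notin svzero Y ->
  exists2 Z, Z \in C & b |: (svzero X :&: svzero Y) \subset svzero Z.
Proof.
case=> _ hopp _ helim hX hY hXY hbX hbY.
suff [Y' hY' [hzY' hb]] : exists2 Y', Y' \in C & svzero Y' = svzero Y /\ b \in svsep X Y'.
  have hXY' : X <> svopp Y' by move=> hXY'; move: hXY; rewrite hXY' svzero_opp hzY' eqxx.
  have [Z hZ hel] := helim _ _ _ hX hY' hXY' hb.
  by exists Z => //; rewrite -hzY'; apply: eliminant_zero hel.
move: hbX hbY; rewrite !inE; case EX: (X b) => [x|] // _; case EY: (Y b) => [y|] // _.
have [hxy|hxy] := eqVneq y x.
- exists (svopp Y); first exact: hopp.
  by rewrite svzero_opp svsepE inE ffunE EX EY hxy; case: x {EX EY hxy}.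
- exists Y => //; split => //.
  by rewrite svsepE inE EX EY; move: hxy; case: x {EX}; case: y {EY}.
Qed.

End Elimination.

Section Contraction.
Variables (n : nat) (e : 'I_n.+1).
Implicit Types (Y Z : sv n) (X : sv n.+1) (C : {set sv n.+1}).

Definition sv_ins Y : sv n.+1 :=
  [ffun j => if unlift e j is Some i then Y i else None].
Definition sv_del X : sv n := [ffun i => X (lift e i)].

Definition contract C : {set sv n} := [set Y | sv_ins Y \in C].

Lemma sv_ins_lift Y i : sv_ins Y (lift e i) = Y i.
Proof. by rewrite ffunE liftK. Qed.

Lemma sv_ins_at Y : sv_ins Y e = None.
Proof. by rewrite ffunE unlift_none. Qed.

Lemma sv_insK : cancel sv_ins sv_del.
Proof. by move=> Y; apply/ffunP => i; rewrite ffunE sv_ins_lift. Qed.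

Lemma sv_delK X : X e = None -> sv_ins (sv_del X) = X.
Proof.
by move=> hX; apply/ffunP => j; rewrite ffunE; case: (unliftP e j) => [i ->|->]; rewrite ?ffunE.
Qed.

Lemma sv_ins_inj : injective sv_ins.
Proof. exact: can_inj sv_insK. Qed.

Lemma in_contract C Y : (Y \in contract C) = (sv_ins Y \in C).
Proof. by rewrite inE. Qed.

Lemma sv_del_in_contract C X : X \in C -> X e = None -> sv_del X \in contract C.
Proof. by move=> hX hXe; rewrite in_contract sv_delK. Qed.

Lemma sv_ins0 : sv_ins (sv0 n) = sv0 n.+1.
Proof. by apply/ffunP => j; rewrite !ffunE; case: unlift => // i; rewrite ffunE. Qed.

Lemma sv_ins_opp Y : sv_ins (svopp Y) = svopp (sv_ins Y).
Proof. by apply/ffunP => j; rewrite !ffunE; case: unlift => // i; rewrite ffunE. Qed.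

Lemma sv_ins_comp Y Z : sv_ins (svcomp Y Z) = svcomp (sv_ins Y) (sv_ins Z).
Proof. by apply/ffunP => j; rewrite !ffunE; case: unlift => // i; rewrite ffunE. Qed.

Lemma foldr_svcomp_ins (s : seq (sv n)) :
  sv_ins (foldr (@svcomp n) (sv0 n) s) = foldr (@svcomp n.+1) (sv0 n.+1) (map sv_ins s).
Proof. by elim: s => [|Y s IH] /=; rewrite ?sv_ins0 // sv_ins_comp IH. Qed.

Lemma notin_lift_image (A : {set 'I_n}) : e \notin lift e @: A.
Proof. by apply/imsetP => -[i _ /eqP]; rewrite (negbTE (neq_lift _ _)). Qed.

Lemma sv_ins_set (P : option bool -> option bool -> bool) Y Z : ~~ P None None ->
  [set j | P (sv_ins Y j) (sv_ins Z j)] = lift e @: [set i | P (Y i) (Z i)].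
Proof.
move=> hP; apply/setP => j; rewrite inE; case: (unliftP e j) => [i ->|->].
  by rewrite mem_imset ?inE ?sv_ins_lift //; exact: lift_inj.
by rewrite !sv_ins_at (negbTE hP) (negbTE (notin_lift_image _)).
Qed.

Lemma svzero_ins Y : svzero (sv_ins Y) = e |: lift e @: svzero Y.
Proof.
apply/setP => j; rewrite !inE; case: (unliftP e j) => [i ->|->].
  rewrite sv_ins_lift (eq_sym (lift e i)) (negbTE (neq_lift _ _)).
  by rewrite mem_imset ?inE //; exact: lift_inj.
by rewrite sv_ins_at !eqxx.
Qed.

Lemma card_svzero_ins Y : #|svzero (sv_ins Y)| = #|svzero Y|.+1.
Proof. by rewrite svzero_ins cardsU1 notin_lift_image card_imset //; exact: lift_inj. Qed.

Lemma card_svzero_insI Y Z :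
  #|svzero (sv_ins Y) :&: svzero (sv_ins Z)| = #|svzero Y :&: svzero Z|.+1.
Proof.
rewrite !svzero_ins -setUIr -imsetI; last by move=> i j _ _; exact: lift_inj.
by rewrite cardsU1 notin_lift_image card_imset //; exact: lift_inj.
Qed.

Lemma svsep_ins Y Z : svsep (sv_ins Y) (sv_ins Z) = lift e @: svsep Y Z.
Proof.
by rewrite !svsepE (@sv_ins_set (fun a b => ((a == Some true) && (b == Some false)) ||
                                             ((a == Some false) && (b == Some true)))).
Qed.

Lemma svsupp_ins Y : svsupp (sv_ins Y) = lift e @: svsupp Y.
Proof.
have hS (W : sv _) : svsupp W = [set j | W j != None].
  by apply/setP => j; rewrite !inE; case: (W j) => // -[].
by rewrite !hS (@sv_ins_set (fun a _ => a != None) Y Y).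
Qed.

Lemma svle_ins Y Z : svle (sv_ins Y) (sv_ins Z) = svle Y Z.
Proof.
apply/forallP/forallP => h j; first by have := h (lift e j); rewrite !sv_ins_lift.
by case: (unliftP e j) => [i ->|->]; rewrite ?sv_ins_lift ?sv_ins_at.
Qed.

Lemma path_svlt_ins Y s :
  path (@svlt n.+1) (sv_ins Y) (map sv_ins s) = path (@svlt n) Y s.
Proof.
by elim: s Y => //= Z s IH Y; rewrite IH /svlt svle_ins (inj_eq sv_ins_inj).
Qed.

End Contraction.

Section ContractionProperties.
Variables (n : nat) (e : 'I_n.+1) (C : {set sv n.+1}).

(* the contraction of an oriented matroid is an oriented matroid; for (CC3),
   an eliminant of the lifted cocircuits vanishes at e and descends *)
Lemma contract_om : is_oriented_matroid C -> is_oriented_matroid (contract e C).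
Proof.
case=> h0 hopp hsupp helim; split.
- by rewrite in_contract sv_ins0.
- by move=> X; rewrite !in_contract sv_ins_opp; apply: hopp.
- move=> X Y; rewrite !in_contract => hX hY hXY.
  have hXY' : svsupp (sv_ins e X) \subset svsupp (sv_ins e Y) by rewrite !svsupp_ins imsetS.
  case: (hsupp _ _ hX hY hXY') => [/sv_ins_inj ->|]; first by left.
  by rewrite -sv_ins_opp => /sv_ins_inj ->; right.
- move=> X Y f; rewrite !in_contract => hX hY hXY hf.
  have hXY' : sv_ins e X <> svopp (sv_ins e Y) by rewrite -sv_ins_opp => /sv_ins_inj.
  have hf' : lift e f \in svsep (sv_ins e X) (sv_ins e Y).
    by rewrite svsep_ins mem_imset //; exact: lift_inj.
  have [Z hZ hel] := helim _ _ _ hX hY hXY' hf'.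
  have hZe : Z e = None.
    apply/eqP; have := subsetP (eliminant_zero hel) e.
    by rewrite !inE !sv_ins_at eqxx orbT => /(_ isT).
  exists (sv_del e Z); first by rewrite in_contract sv_delK.
  split; apply/subsetP => j; rewrite !inE ffunE => /eqP hj.
  + have [hjf hXYj] := eliminant_pos hel hj.
    rewrite (inj_eq lift_inj) !sv_ins_lift in hjf hXYj.
    by rewrite hjf; case: hXYj => ->; rewrite eqxx ?orbT.
  + have [hjf hXYj] := eliminant_neg hel hj.
    rewrite (inj_eq lift_inj) !sv_ins_lift in hjf hXYj.
    by rewrite hjf; case: hXYj => ->; rewrite eqxx ?orbT.
Qed.

(* contracting lowers the size of every zero set, hence the rank, by one *)
Lemma contract_uniform r : uniform C r.+1 -> uniform (contract e C) r.
Proof. by move=> hu Y; rewrite in_contract => /hu; rewrite card_svzero_ins; lia. Qed.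

Lemma contract_adj r Y Z : cocircuit_adj (contract e C) r Y Z ->
  cocircuit_adj C r.+1 (sv_ins e Y) (sv_ins e Z).
Proof.
case/and5P => hY hZ hYZ hcard hsep; apply/and5P; split.
- by rewrite -in_contract.
- by rewrite -in_contract.
- by rewrite (inj_eq (@sv_ins_inj _ e)).
- by rewrite card_svzero_insI; lia.
- by rewrite svsep_ins imset_eq0.
Qed.

Lemma contract_dist r Y Z d : dist_le (contract e C) r Y Z d ->
  dist_le C r.+1 (sv_ins e Y) (sv_ins e Z) d.
Proof.
case=> s [hs hp hl]; exists (map (sv_ins e) s); split.
- by rewrite size_map.
- by rewrite path_map; apply: sub_path hp => U V /contract_adj.
- by rewrite last_map hl.
Qed.

Lemma covector_del V : covector C V -> V e = None -> covector (contract e C) (sv_del e V).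
Proof.
case=> u [hu ->] hVe.
have hall : all (fun X : sv n.+1 => X e == None) u by rewrite -foldr_svcomp_zero hVe.
have hdelK : {in u, cancel (sv_del e) (sv_ins e)}.
  by move=> X hX; apply: sv_delK; apply/eqP; move/allP: hall; apply.
exists (map (sv_del e) u); split.
  apply/allP => Y /mapP [X hX ->]; rewrite /mem /= in_contract hdelK //.
  by move/allP: hu; apply.
apply: (@sv_ins_inj _ e); rewrite sv_delK // foldr_svcomp_ins -map_comp.
by congr foldr; rewrite -[LHS]map_id; apply/eq_in_map => X /hdelK /= ->.
Qed.

End ContractionProperties.

(* For a uniform
   oriented matroid of rank r this holds (rank_all_zero_sets), and together
   with uniformity it forces rank r (all_zero_sets_rank). *)
Definition all_zero_sets n (C : {set sv n}) r : Prop :=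
  forall T : {set 'I_n}, #|T| = r - 1 -> exists2 X, X \in C & svzero X = T.

Lemma lift_preimageK n (e : 'I_n.+1) (T : {set 'I_n.+1}) :
  e \in T -> e |: lift e @: (lift e @^-1: T) = T.
Proof.
move=> heT; apply/setP => j; rewrite !inE; case: (unliftP e j) => [i ->|->].
  by rewrite (eq_sym (lift e i)) (negbTE (neq_lift _ _)) mem_imset ?inE //; exact: lift_inj.
by rewrite eqxx heT.
Qed.

Section ContractionZeroSets.
Variables (n : nat) (e : 'I_n.+1) (C : {set sv n.+1}) (r : nat).

Lemma contract_all_zero_sets : 0 < r ->
  all_zero_sets C r.+1 -> all_zero_sets (contract e C) r.
Proof.
move=> hr hF T hT.
have hT' : #|e |: lift e @: T| = r.+1 - 1.
  by rewrite cardsU1 notin_lift_image card_imset ?hT; [lia | exact: lift_inj].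
have [X hX hXz] := hF _ hT'.
have hXe : X e = None by apply/eqP; move/setP: hXz => /(_ e); rewrite !inE eqxx.
exists (sv_del e X); first exact: sv_del_in_contract.
apply: (imset_inj (@lift_inj _ e)); rewrite -(setU1K (notin_lift_image e _)).
by rewrite -svzero_ins sv_delK // hXz setU1K // notin_lift_image.
Qed.

Lemma zero_sets_through : 0 < r -> all_zero_sets (contract e C) r ->
  forall T : {set 'I_n.+1}, #|T| = r -> e \in T -> exists2 X, X \in C & svzero X = T.
Proof.
move=> hr hF T hT heT.
have hT' : #|lift e @^-1: T| = r - 1.
  move: hT; rewrite -{1}(lift_preimageK heT) cardsU1 notin_lift_image card_imset //.
    by move=> /= hT; lia.
  exact: lift_inj.
have [Y hY hYz] := hF _ hT'.
by exists (sv_ins e Y); rewrite ?svzero_ins ?hYz ?lift_preimageK // -in_contract.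
Qed.

End ContractionZeroSets.

Section ZeroSetExchange.
Variables (n : nat) (C : {set sv n}) (r : nat) (e : 'I_n).
Hypotheses (hOM : is_oriented_matroid C) (hu : uniform C r.+1).
Hypothesis hthrough :
  forall T : {set 'I_n}, #|T| = r -> e \in T -> exists2 X, X \in C & svzero X = T.

(* replace a by b in the zero set of a cocircuit X not vanishing at e, by
   eliminating (avoiding b) between X and the cocircuit with zero set
   e + (X^0 - a) *)
Lemma zero_set_exchange X a b : X \in C -> e \notin svzero X ->
  a \in svzero X -> b \notin svzero X -> b != e ->
  exists2 Z, Z \in C & svzero Z = b |: (svzero X :\ a).
Proof.
move=> hX heX haX hbX hbe; set U := svzero X :\ a.
have hXr : #|svzero X| = r by rewrite (hu hX) subn1.
have hU : #|U| = r.-1 by move: (cardsD1 a (svzero X)); rewrite -/U haX hXr /=; lia.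
have heU : e \notin U by rewrite inE negb_and heX orbT.
have hbU : b \notin U by rewrite inE negb_and hbX orbT.
have [Y hY hYz] : exists2 Y, Y \in C & svzero Y = e |: U.
  have hr : 0 < r by rewrite -hXr; apply/card_gt0P; exists a.
  by apply: hthrough (setU11 e U); rewrite cardsU1 heU hU /=; lia.
have hXY : svzero X != svzero Y by apply: contraNneq heX => ->; rewrite hYz setU11.
have hbY : b \notin svzero Y by rewrite hYz in_setU1 negb_or hbe.
have [Z hZ hsub] := elim_zero_at hOM hX hY hXY hbX hbY.
exists Z => //; apply/esym/eqP; rewrite eqEcard (subset_trans _ hsub) /=.
  by rewrite (hu hZ) cardsU1 hbU hU /=; lia.
by rewrite setUS // hYz subsetI subsetDl subsetUr.
Qed.

Lemma all_zero_sets_by_exchange X0 : X0 \in C -> e \notin svzero X0 ->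
  all_zero_sets C r.+1.
Proof.
move=> hX0 heX0 T; rewrite subn1 /= => hT.
have [heT|heT] := boolP (e \in T); first exact: hthrough.
suff hind m X : X \in C -> e \notin svzero X -> #|T :\: svzero X| = m ->
    exists2 Z, Z \in C & svzero Z = T by exact: hind hX0 heX0 erefl.
elim: m X => [|m IH] X hX heX hm.
  exists X => //; apply/esym/eqP; rewrite eqEcard -setD_eq0 -cards_eq0 hm eqxx /=.
  by rewrite (hu hX) hT subn1.
have [b hb] : exists b, b \in T :\: svzero X by apply/set0Pn; rewrite -cards_eq0 hm.
have [a ha] : exists a, a \in svzero X :\: T.
  apply/set0Pn; rewrite setD_eq0; apply: contraTN hb => hXT.
  have {}hXT : svzero X = T by apply/eqP; rewrite eqEcard hXT (hu hX) hT subn1 leqnn.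
  by rewrite hXT setDv inE.
move: ha hb; rewrite !in_setD => /andP [haT haX] /andP [hbX hbT].
have hbe : b != e by apply: contraNneq heT => <-.
have [Z hZ hZz] := zero_set_exchange hX heX haX hbX hbe.
apply: (IH Z hZ).
  by rewrite hZz in_setU1 in_setD1 negb_or eq_sym hbe negb_and heX orbT.
have -> : T :\: svzero Z = (T :\: svzero X) :\ b.
  apply/setP => j; rewrite hZz !inE.
  have [->|_] := eqVneq j a; first by rewrite (negbTE haT) !andbF.
  by rewrite negb_or andbA.
by move: (cardsD1 b (T :\: svzero X)); rewrite in_setD hbX hbT hm /=; lia.
Qed.

End ZeroSetExchange.

Lemma covector_cocircuit n (C : {set sv n}) V : covector C V -> V != sv0 n ->
  exists2 X, X \in C & svzero V \subset svzero X.
Proof.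
case=> [[|X s]] [hs ->] /=; first by rewrite eqxx.
move=> _; exists X; first by case/andP: hs.
by apply/subsetP => j; rewrite !inE ffunE; case: (X j).
Qed.

Lemma covector_support n (C : {set sv n}) V j : covector C V -> V j != None ->
  exists2 X, X \in C & X j != None.
Proof.
case=> u [hu ->]; rewrite foldr_svcomp_zero => /allPn [X hX hXj].
by exists X => //; move/allP: hu; apply.
Qed.

Lemma covector_chain_size n (C : {set sv n}) r s : uniform C r -> 0 < r ->
  covector_chain C s -> size s <= r.
Proof.
move=> hu hr; case: s => [|V s] //= [/andP [/andP [hV _] hp] hcov].
have [X hX hVX] : exists2 X, X \in C & svzero V \subset svzero X.
  by apply: covector_cocircuit (hcov V (mem_head _ _)) _; rewrite eq_sym.
by have := leq_trans (svlt_path_size hp) (subset_leq_card hVX); rewrite (hu X hX); lia.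
Qed.

(* Removing the top of a maximal chain: below the top element all covectors
   vanish at some e where the top does not; they form a chain of M/e. *)
Lemma chain_contract n (C : {set sv n.+1}) s V : covector_chain C (rcons s V) ->
  exists e, covector_chain (contract e C) (map (sv_del e) s) /\
            exists2 X, X \in C & X e != None.
Proof.
case; rewrite rcons_path => /andP [hp hlt] hcov.
have /properP [_ [e heL heV]] := svlt_zero hlt.
have hse W : W \in s -> W e = None.
  move=> hW; have hW0 : W \in sv0 n.+1 :: s by rewrite inE hW orbT.
  by apply/eqP; move: (subsetP (svlt_path_last hp hW0) e heL); rewrite inE.
have hmap : map (sv_ins e) (map (sv_del e) s) = s.
  by rewrite -map_comp -[RHS]map_id; apply/eq_in_map => W /hse /sv_delK.
exists e; split; last first.
  apply: covector_support (hcov V _) _; first by rewrite mem_rcons mem_head.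
  by move: heV; rewrite inE.
split; first by rewrite -(path_svlt_ins e) sv_ins0 hmap.
move=> W /mapP [W' hW' ->]; apply: covector_del (hse _ hW').
by apply: hcov; rewrite mem_rcons inE hW' orbT.
Qed.

(* Rank => all zero sets: induction on the rank, contracting the element
   given by chain_contract and exchanging zero sets. *)
Lemma rank_all_zero_sets r : forall n (C : {set sv n}),
  is_oriented_matroid C -> uniform C r.+1 ->
  (exists s, covector_chain C s /\ size s = r.+1) -> all_zero_sets C r.+1.
Proof.
elim: r => [|r IH] n C hOM hu [s [hs hsz]].
  case: s hs hsz => [|V [|]] // hs _ T.
  have hV : V != sv0 n by case: hs => /= /andP [/andP [hV _] _] _; rewrite eq_sym.
  have [X hX _] := covector_cocircuit (hs.2 V (mem_head _ _)) hV.
  rewrite subnn => /eqP; rewrite cards_eq0 => /eqP ->; exists X => //.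
  by apply/eqP; rewrite -cards_eq0 (hu X hX).
case: n C hOM hu s hs hsz => [|n] C hOM hu s hs hsz.
  have := svlt_path_size hs.1; rewrite hsz.
  by move/leq_trans/(_ (max_card _)); rewrite card_ord.
case/lastP: s hs hsz => [//|s V] hs; rewrite size_rcons => -[hsz].
have [e [hch [X0 hX0 hX0e]]] := chain_contract hs.
have hF := IH _ _ (contract_om e hOM) (contract_uniform (e := e) hu)
  (ex_intro _ _ (conj hch (etrans (size_map _ _) hsz))).
apply: (all_zero_sets_by_exchange hOM hu (zero_sets_through _ hF) hX0) => //.
by rewrite inE.
Qed.

Lemma exists_card_between (T : finType) (A B : {set T}) m :
  A \subset B -> #|A| <= m -> m <= #|B| ->
  exists Y : {set T}, [/\ A \subset Y, Y \subset B & #|Y| = m].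
Proof.
move=> hAB hA hB; have [k hk] : exists k, k = m - #|A| by exists (m - #|A|).
elim: k A hAB hA hk => [|k IH] A hAB hA hk; first by exists A; split => //; lia.
have /properP [_ [x hxB hxA]] : A \proper B by rewrite properEcard hAB /=; lia.
have [|||Y [hxAY hYB hY]] := IH (x |: A).
- by rewrite subUset sub1set hxB hAB.
- by rewrite cardsU1 hxA /=; lia.
- by rewrite cardsU1 hxA /=; lia.
by exists Y; split => //; apply: subset_trans (subsetUr _ _) hxAY.
Qed.

(* All zero sets => rank: build a chain of compositions of cocircuits whose
   zero sets decrease by one element at a time. *)
Section ChainConstruction.
Variables (n : nat) (C : {set sv n}) (r : nat).
Hypotheses (hC0 : sv0 n \notin C) (hF : all_zero_sets C r) (hrn : r <= n).

(* compose V with a cocircuit vanishing on Z but not at a *)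
Lemma covector_step V Z a : covector C V -> svzero V = a |: Z -> a \notin Z ->
  #|Z| <= r - 1 -> exists2 W, covector C W & svlt V W /\ svzero W = Z.
Proof.
move=> [u [hu hV]] hVz haZ hZ.
have hZa : Z \subset ~: [set a].
  by apply/subsetP => j hj; rewrite !inE; apply: contraNneq haZ => <-.
have hra : r - 1 <= #|~: [set a]| by rewrite cardsC1 card_ord; lia.
have [Y [hZY hYa hY]] := exists_card_between hZa hZ hra.
have [X hX hXz] := hF hY.
have haY : a \notin Y by apply/negP => /(subsetP hYa); rewrite !inE eqxx.
have hXa : X a != None by move: haY; rewrite -hXz inE.
have hVa : V a = None by apply/eqP; move/setP: hVz => /(_ a); rewrite !inE eqxx.
exists (svcomp V X).
  by exists (rcons u X); rewrite all_rcons hu andbT foldr_svcomp_rcons hV.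
split.
  rewrite /svlt; apply/andP; split.
    by apply: contra_neq hXa => /ffunP /(_ a); rewrite ffunE hVa => ->.
  by apply/forallP => j; rewrite ffunE; case: (V j) => //= ?; rewrite eqxx orbT.
apply/setP => j; rewrite svzero_comp hVz hXz in_setI in_setU1.
have [->|_] := eqVneq j a; first by rewrite (negbTE haY) (negbTE haZ).
by apply/andb_idr/subsetP.
Qed.

Lemma chain_to_zero_set d (Z : {set 'I_n}) : #|Z| + d = r - 1 ->
  exists s, [/\ covector_chain C s, size s = d.+1 & svzero (last (sv0 n) s) = Z].
Proof.
elim: d Z => [|d IH] Z hZ.
  rewrite addn0 in hZ; have [X hX hXz] := hF hZ.
  exists [:: X]; split => //; split.
    rewrite /= andbT /svlt; apply/andP; split; first by apply: contraNneq hC0 => ->.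
    by apply/forallP => j; rewrite ffunE.
  by move=> V; rewrite inE => /eqP ->; exists [:: X]; rewrite /= andbT svcomp0r.
have [a haZ] : exists a, a \notin Z.
  have : Z \proper [set: 'I_n] by rewrite properEcard subsetT cardsT card_ord; lia.
  by case/properP => _ [a _ ha]; exists a.
have [|s [[hp hcov] hs hsz]] := IH (a |: Z); first by rewrite cardsU1 haZ -hZ add1n addSn addnS.
have hlast : covector C (last (sv0 n) s).
  by apply: hcov; case/lastP: s hs {hp hsz} => [//|s V] _; rewrite last_rcons mem_rcons mem_head.
have [|W hW [hlt hWz]] := covector_step hlast hsz haZ; first by lia.
exists (rcons s W); split; rewrite ?size_rcons ?hs ?last_rcons //; split.
  by rewrite rcons_path hp.
by move=> V; rewrite mem_rcons inE => /orP [/eqP ->|/hcov].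
Qed.

End ChainConstruction.

(* full zero sets give the maximal chain; uniformity bounds all chains *)
Lemma all_zero_sets_rank n (C : {set sv n}) r : is_oriented_matroid C ->
  uniform C r -> all_zero_sets C r -> 0 < r <= n -> has_rank C r.
Proof.
case=> hC0 _ _ _ hu hF /andP [hr hrn]; split; last by move=> s; apply: covector_chain_size.
have [|s [hs hsz _]] := chain_to_zero_set hC0 hF hrn (Z := set0) (d := r.-1).
  by rewrite cards0; lia.
by exists s; split => //; lia.
Qed.

(* The properties of a uniform oriented matroid of rank r that are carried
   through the induction; by rank_all_zero_sets every uniform oriented
   matroid of rank r on at least r elements has them. *)
Definition uniform_om n (C : {set sv n}) r : Prop :=
  [/\ is_oriented_matroid C, uniform C r, all_zero_sets C r & r <= n].

Lemma contract_uniform_om n (e : 'I_n.+1) (C : {set sv n.+1}) r : 0 < r ->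
  uniform_om C r.+1 -> uniform_om (contract e C) r.
Proof.
move=> hr [hOM hu hF hrn]; split; [exact: contract_om | exact: contract_uniform |
  exact: contract_all_zero_sets | by []].
Qed.

Definition dist_bounded n (C : {set sv n}) r d : Prop :=
  forall X Y, X \in C -> Y \in C -> dist_le C r X Y d.

Definition connected n (C : {set sv n}) r : Prop :=
  forall X Y, X \in C -> Y \in C -> exists d, dist_le C r X Y d.

Lemma dist_mono n (C : {set sv n}) r X Y d d' : d <= d' ->
  dist_le C r X Y d -> dist_le C r X Y d'.
Proof. by move=> hd [s [hs hp hl]]; exists s; split => //; apply: leq_trans hd. Qed.

Lemma dist_cat n (C : {set sv n}) r X W Y d1 d2 :
  dist_le C r X W d1 -> dist_le C r W Y d2 -> dist_le C r X Y (d1 + d2).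
Proof.
case=> s1 [h1 p1 l1] [s2 [h2 p2 l2]]; exists (s1 ++ s2); split.
- by rewrite size_cat leq_add.
- by rewrite cat_path p1 l1 p2.
- by rewrite last_cat l1.
Qed.

Lemma connected_via n (C : {set sv n}) r X W Y :
  (exists d, dist_le C r X W d) -> (exists d, dist_le C r W Y d) ->
  exists d, dist_le C r X Y d.
Proof. by case=> d1 h1 [d2 h2]; exists (d1 + d2); apply: dist_cat h1 h2. Qed.

(* Rank 2: induction on the size of the separating set; a pair with nonempty
   separating set is bridged by an eliminant, or, for X = -Y, by a cocircuit
   vanishing at one point of the common support. *)
Lemma rank2_connected n (C : {set sv n}) : uniform_om C 2 -> connected C 2.
Proof.
case=> [[_ hopp _ helim] hu hF hn] X0 Y0 hX0 hY0.
suff hind m X Y : X \in C -> Y \in C -> #|svsep X Y| < m ->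
    exists d, dist_le C 2 X Y d by exact: hind hX0 hY0 (ltnSn _).
elim: m X Y => // m IH X Y hX hY hm.
have via W : W \in C -> svsep X W \proper svsep X Y -> svsep W Y \proper svsep X Y ->
    exists d, dist_le C 2 X Y d.
  move=> hW hXW hWY; apply: (connected_via (W := W)).
    by apply: IH => //; apply: leq_trans (proper_card hXW) hm.
  by apply: IH => //; apply: leq_trans (proper_card hWY) hm.
have [->|hXY] := eqVneq X Y; first by exists 0, [::].
have [hsep|/set0Pn [e he]] := eqVneq (svsep X Y) set0.
  by exists 1, [:: Y]; split => //=; rewrite andbT; apply/and5P; split => //; rewrite hsep.
have [hXY'|hXY'] := eqVneq X (svopp Y); last first.
  have [Z hZ hel] := helim _ _ _ hX hY (elimN eqP hXY') he.
  by have [] := eliminant_sep_proper hel he; apply: via.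
have hS : svsep X Y = ~: svzero Y by rewrite hXY' svsep_opp.
have [b hb] : exists b, b \notin svzero Y.
  have : svzero Y \proper [set: 'I_n] by rewrite properEcard subsetT cardsT card_ord (hu Y hY).
  by case/properP => _ [b _ hb]; exists b.
have [W hW hWz] := hF [set b] (cards1 b).
have hbW : b \in svzero W by rewrite hWz set11.
apply: (via W hW); apply/properP; rewrite hS; split.
- by rewrite -(svzero_opp Y) -hXY'; apply: svsep_suppl.
- exists b; first by rewrite in_setC.
  by apply: contraL hbW => /(subsetP (svsep_suppr _ _)); rewrite in_setC.
- exact: svsep_suppr.
- exists b; first by rewrite in_setC.
  by apply: contraL hbW => /(subsetP (svsep_suppl _ _)); rewrite in_setC.
Qed.

Lemma connected_through_contraction n (C : {set sv n.+1}) r (a : 'I_n.+1) X Y :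
  connected (contract a C) r -> X \in C -> Y \in C -> X a = None -> Y a = None ->
  exists d, dist_le C r.+1 X Y d.
Proof.
move=> hconn hX hY hXa hYa.
have [d hd] := hconn _ _ (sv_del_in_contract hX hXa) (sv_del_in_contract hY hYa).
by exists d; have := contract_dist hd; rewrite !sv_delK.
Qed.

(* Higher rank: X and Y are both joined, through contractions, to a cocircuit
   vanishing at a zero of X and at a zero of Y. *)
Lemma uniform_om_connected r : forall n (C : {set sv n}),
  uniform_om C r.+2 -> connected C r.+2.
Proof.
elim: r => [|r IH] n C hC; first exact: rank2_connected.
case: n C hC => [|n] C hC X Y hX hY; first by case: hC.
have [_ hu hF hrn] := hC.
have hconn a : connected (contract a C) r.+2 by apply/IH/contract_uniform_om.
have [a ha] : exists a, a \in svzero X by apply/set0Pn; rewrite -card_gt0 (hu X hX).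
have [b hb] : exists b, b \in svzero Y by apply/set0Pn; rewrite -card_gt0 (hu Y hY).
move: ha hb; rewrite !inE => /eqP hXa /eqP hYb.
have [|||T [habT _ hT]] := @exists_card_between _ [set a; b] [set: 'I_n.+1] r.+2.
- exact: subsetT.
- by rewrite cards2; case: (a != b).
- by rewrite cardsT card_ord; lia.
have [W hW hWz] : exists2 W, W \in C & svzero W = T by apply: hF; rewrite hT subn1.
have hWab c : c \in [set a; b] -> W c = None.
  by move=> hc; apply/eqP; have := subsetP habT c hc; rewrite -hWz inE.
apply: (connected_via (W := W)).
  apply: (connected_through_contraction (hconn a) hX hW); first exact: hXa.
  by apply: hWab; rewrite !inE eqxx.
apply: (connected_through_contraction (hconn b) hW hY); last exact: hYb.
by apply: hWab; rewrite !inE eqxx orbT.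
Qed.

Lemma finite_dominating (I : finType) (i0 : I) (P : I -> nat -> Prop) :
  (forall i, exists d, P i d) ->
  exists i d, P i d /\ forall j, exists2 d', P j d' & d' <= d.
Proof.
move=> hP.
suff [i [d [hid hd]]] : exists i d, P i d /\
    forall j, j \in enum I -> exists2 d', P j d' & d' <= d.
  by exists i, d; split => // j; apply: hd; rewrite mem_enum.
elim: (enum I) => [|x l [i [d [hid hd]]]].
  by have [d hd] := hP i0; exists i0, d.
have [dx hx] := hP x; have [hle|hlt] := leqP dx d.
  by exists i, d; split => // j; rewrite inE => /orP [/eqP ->|/hd]; first exists dx.
exists x, dx; split => // j; rewrite inE => /orP [/eqP ->|/hd [d' hj hd']]; first by exists dx.
by exists d'; rewrite // (leq_trans hd') // ltnW.
Qed.

Lemma diameter_exists n (C : {set sv n}) r : connected C r ->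
  exists D, is_cocircuit_diam C r D.
Proof.
move=> hconn.
have hpair (p : sv n * sv n) : exists d, p.1 \in C -> p.2 \in C -> dist_le C r p.1 p.2 d.
  case: p => X Y /=; have [hX|hX] := boolP (X \in C); last by exists 0.
  have [hY|hY] := boolP (Y \in C); last by exists 0.
  by have [d hd] := hconn _ _ hX hY; exists d.
have [_ [D0 [_ hD0]]] := finite_dominating (sv0 n, sv0 n) hpair.
have hbound : dist_bounded C r D0.
  by move=> X Y hX hY; have [d hd hdD] := hD0 (X, Y); apply: dist_mono hdD (hd hX hY).
have [D [[hD hmin] _]] := @dec_inh_nat_subset_has_unique_least_element
  (dist_bounded C r) (fun d => classic _) (ex_intro _ D0 hbound).
by exists D; split => // D' /hmin /leP.
Qed.

Definition small_rank_diameter k D : Prop :=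
  exists r' : nat, [/\ 2 <= r', r' <= k + 2 &
    exists C' : {set sv (r' + k)},
      [/\ is_oriented_matroid C', has_rank C' r', uniform C' r' &
          is_cocircuit_diam C' r' D]].

(* if the rank is already at most k+2, M itself is the witness *)
Lemma small_rank_self r k (C : {set sv (r.+2 + k)}) : r <= k ->
  uniform_om C r.+2 -> exists2 D, small_rank_diameter k D & dist_bounded C r.+2 D.
Proof.
move=> hrk hC; have [D hD] := diameter_exists (uniform_om_connected hC).
have [hOM hu hF hrn] := hC; exists D; last by case: hD.
exists r.+2; split => //; first by lia.
by exists C; split => //; apply: all_zero_sets_rank.
Qed.

Lemma common_zero n (C : {set sv n}) r X Y : uniform C r ->
  n < (r - 1) + (r - 1) -> X \in C -> Y \in C ->
  exists e, e \in svzero X :&: svzero Y.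
Proof.
move=> hu hn hX hY; apply/set0Pn; rewrite -card_gt0.
have := cardsUI (svzero X) (svzero Y); rewrite (hu X hX) (hu Y hY).
by have := max_card (svzero X :|: svzero Y); rewrite card_ord; lia.
Qed.

(* Main induction: for rank > k+2, bound all distances through the
   contraction whose small-rank witness has the largest diameter. *)
Lemma diameter_reduction r : forall k (C : {set sv (r.+2 + k)}),
  uniform_om C r.+2 -> exists2 D, small_rank_diameter k D & dist_bounded C r.+2 D.
Proof.
elim: r => [|r IH] k C hC; first exact: small_rank_self.
have [hrk|hkr] := leqP r.+1 k; first exact: small_rank_self.
have [_ hu _ _] := hC.
have hcontr (e : 'I_(r.+2 + k).+1) : exists D,
    small_rank_diameter k D /\ dist_bounded (contract e C) r.+2 D.
  by have [D hD hb] := IH k (contract e C) (contract_uniform_om e (ltn0Sn _) hC); exists D.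
have [_ [D [[hsmall _] hmax]]] := finite_dominating ord0 hcontr.
exists D => // X Y hX hY.
have [|e] := common_zero hu _ hX hY; first by lia.
rewrite !inE => /andP [/eqP hXe /eqP hYe].
have [d [_ hd] hdD] := hmax e.
have := contract_dist (hd _ _ (sv_del_in_contract hX hXe) (sv_del_in_contract hY hYe)).
by rewrite !sv_delK //; apply: dist_mono.
Qed.

Unset Implicit Arguments.

Theorem theorem4p4 (k r : nat) (C : {set sv (r + k)}) (D : nat) :
  2 <= r ->
  is_oriented_matroid C -> has_rank C r -> uniform C r ->
  is_cocircuit_diam C r D ->
  exists r' : nat, [/\ 2 <= r', r' <= k + 2 &
    exists C' : {set sv (r' + k)}, exists D' : nat,
      [/\ is_oriented_matroid C', has_rank C' r', uniform C' r',
          is_cocircuit_diam C' r' D' & D <= D']].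
Proof.
case: r C => [|[|r]] // C _ hOM [hchain _] hu [_ hmin].
have hC : uniform_om C r.+2.
  by split => //; [exact: rank_all_zero_sets | exact: leq_addr].
have [D' [r' [h2r' hr'k [C' [hOM' hrank' hu' hdiam']]]] hbound] := diameter_reduction hC.
exists r'; split => //; exists C', D'; split => //.
exact: hmin.
Qed.
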